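(* Let $\dot x = Ax+\sum_{i=1}^mB_iu_i$, $y_i=C_ix$ be an $n$-dimensional $m$-channel continuous-time linear system with neighbor graph $\mathbb{N}$, let $n_i>0$ for all $i\in\{1,\dots,m\}$, and let $\{\bar A,\bar B_i,\bar C_i;m\}$ be the extended system with $\bar A=\begin{bmatrix}A&0\\0&0\end{bmatrix}$, $\bar B_i=\begin{bmatrix}B_i&0\\0&E_i\end{bmatrix}$, $\bar C_i=\begin{bmatrix}C_i&0\\0&E_{\mathcal{N}_i}'\end{bmatrix}$, where $E_i$ is the $(\sum_kn_k)\times n_i$ block column matrix with $I_{n_i}$ as its $i$th block and zeros elsewhere and $E_{\mathbf{s}}=[E_{i_1}\ \cdots\ E_{i_s}]$ for $\mathbf{s}=\{i_1<\dots<i_s\}$. Then the transfer graph of the extended system is strongly connected if and only if the union of the transfer graph and the neighbor graph of the original system is strongly connected.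
   Context: The neighbor graph is a directed graph on $\{1,\dots,m\}$ with an arc $j\to i$ iff $j$ is a neighbor of $i$; $\mathcal{N}_i$ is the set of neighbors of $i$ including $i$. The transfer graph of an $m$-channel system $\{A,B_i,C_i;m\}$ is the directed graph on $\{1,\dots,m\}$ with an arc from $j$ to $i$ whenever the transfer matrix $C_i(sI-A)^{-1}B_j\neq0$. The union of two directed graphs on the same $m$ vertices is the directed graph on those vertices whose arc set is the union of their arc sets. Strongly connected: directed paths exist between every ordered pair of vertices. *)

From HB Require Import structures.
From mathcomp Require Import all_boot all_order all_algebra.
From mathcomp Require Import fraction.
Set Implicit Arguments. Unset Strict Implicit. Unset Printing Implicit Defensive.
Import Order.TTheory GRing.Theory Num.Theory.
Local Open Scope ring_scope.

Definition ratf (R : fieldType) := {fraction {poly R}}.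

Definition rcst (R : fieldType) (a : R) : ratf R :=
  FracField.tofrac (a%:P : {poly R}).

Definition svar (R : fieldType) : ratf R := FracField.tofrac ('X : {poly R}).

Definition transfer_mx (R : fieldType) (n p q : nat)
  (A : 'M[R]_n) (B : 'M[R]_(n, p)) (C : 'M[R]_(q, n)) : 'M[ratf R]_(q, p) :=
  map_mx (@rcst R) C *m invmx ((svar R)%:M - map_mx (@rcst R) A)
    *m map_mx (@rcst R) B.

(* Transfer graph of the m-channel system {A, B_i, C_i; m}:
   arc j -> i (i.e. [transfer_graph A B C j i]) iff C_i (sI-A)^{-1} B_j <> 0. *)
Definition transfer_graph (R : fieldType) (n m : nat) (p q : 'I_m -> nat)
  (A : 'M[R]_n) (B : forall i : 'I_m, 'M[R]_(n, p i))
  (C : forall i : 'I_m, 'M[R]_(q i, n)) : rel 'I_m :=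
  fun j i => transfer_mx A (B j) (C i) != 0.

Definition neighbor_graph (m : nat) (Nb : 'I_m -> {set 'I_m}) : rel 'I_m :=
  fun j i => (j != i) && (j \in Nb i).

Definition graph_union (T : finType) (e1 e2 : rel T) : rel T :=
  fun j i => e1 j i || e2 j i.

Definition strongly_connected (T : finType) (e : rel T) : Prop :=
  forall x y : T, connect e x y.

Definition Eblk (R : fieldType) (m : nat) (nn : 'I_m -> nat) (i : 'I_m)
  : 'M[R]_(\sum_(k < m) nn k, nn i) :=
  \mxcol_(k < m) (if k == i then pid_mx (nn i) else 0 : 'M[R]_(nn k, nn i)).

(* E_s = [E_{i_1} ... E_{i_s}] for s = {i_1 < ... < i_s}
   (enum of a set of ordinals lists its elements in increasing order). *)
Definition Eset (R : fieldType) (m : nat) (nn : 'I_m -> nat) (s : {set 'I_m})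
  : 'M[R]_(\sum_(k < m) nn k, \sum_(j < #|s|) nn (enum_val j)) :=
  \mxrow_(j < #|s|) Eblk R nn (enum_val j).

Definition ext_A (R : fieldType) (n m : nat) (nn : 'I_m -> nat) (A : 'M[R]_n)
  : 'M[R]_(n + \sum_(k < m) nn k) := block_mx A 0 0 0.

Definition ext_B (R : fieldType) (n m : nat) (nn p : 'I_m -> nat)
  (B : forall i : 'I_m, 'M[R]_(n, p i)) (i : 'I_m)
  : 'M[R]_(n + \sum_(k < m) nn k, p i + nn i) :=
  block_mx (B i) 0 0 (Eblk R nn i).

Definition ext_C (R : fieldType) (n m : nat) (nn q : 'I_m -> nat)
  (Nb : 'I_m -> {set 'I_m}) (C : forall i : 'I_m, 'M[R]_(q i, n)) (i : 'I_m)
  : 'M[R]_(q i + \sum_(j < #|Nb i|) nn (enum_val j), n + \sum_(k < m) nn k) :=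
  block_mx (C i) 0 0 (Eset R nn (Nb i))^T.

(* The resolvent of the extended system is block diagonal, with blocks
   (sI - A)^-1 and s^-1 I, so the (i, j) transfer matrix of the extended
   system is diag(C_i (sI - A)^-1 B_j, s^-1 E'_{N_i} E_j).  Since
   E_k' E_j is I when k = j and 0 otherwise, the second block is nonzero
   exactly when j \in N_i.  Hence the extended transfer graph and the union
   graph have the same arcs up to self-loops, and self-loops do not affect
   strong connectivity. *)

From HB Require Import structures.
From mathcomp Require Import all_boot all_order all_algebra.
From mathcomp Require Import fraction.
Set Implicit Arguments. Unset Strict Implicit. Unset Printing Implicit Defensive.
Import Order.TTheory GRing.Theory Num.Theory.
Local Open Scope ring_scope.

Lemma connect_eq_offdiag (T : finType) (e1 e2 : rel T) :
  (forall x y, x != y -> e1 x y = e2 x y) -> connect e1 =2 connect e2.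
Proof.
have connect_offdiag_sub f g : (forall x y, x != y -> f x y = g x y) ->
    forall x y, connect f x y -> connect g x y.
  move=> fg x y; apply: connect_sub => u v fuv.
  have [-> | neq_uv] := eqVneq u v; first exact: connect0.
  by apply: connect1; rewrite -fg.
move=> e12 x y; apply/idP/idP; apply: connect_offdiag_sub => // u v neq_uv.
by rewrite e12.
Qed.

Lemma mxcol_eq0 (V : nmodType) (m k : nat) (p_ : 'I_m -> nat)
    (B_ : forall i, 'M[V]_(p_ i, k)) :
  (\mxcol_i B_ i == 0) = [forall i, B_ i == 0].
Proof.
apply/eqP/forallP => [B0 i | B0].
  by rewrite -(mxcolK B_ i) B0 submxcol0.
by rewrite -mxcol0; apply: eq_mxcol => i; apply/eqP.
Qed.

Section ExtendedSystem.

Variable R : fieldType.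

HB.instance Definition _ :=
  GRing.RMorphism.copy (@rcst R) (@FracField.tofrac _ \o polyC).

Lemma svar_neq0 : svar R != 0.
Proof. by rewrite tofrac_eq0 polyX_eq0. Qed.

Lemma sI_subA_unitmx (n : nat) (A : 'M[R]_n) :
  (svar R)%:M - map_mx (@rcst R) A \in unitmx.
Proof.
have -> : (svar R)%:M - map_mx (@rcst R) A
    = map_mx (@FracField.tofrac _) (char_poly_mx A).
  by rewrite /char_poly_mx map_mxB map_scalar_mx -map_mx_comp.
rewrite unitmxE det_map_mx unitfE tofrac_eq0.
exact: monic_neq0 (char_poly_monic A).
Qed.

Lemma transfer_mx_block_diag (n N p q k1 k2 : nat) (A : 'M[R]_n)
    (B : 'M[R]_(n, p)) (C : 'M[R]_(q, n))
    (E1 : 'M[R]_(N, k1)) (E2 : 'M[R]_(k2, N)) :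
  transfer_mx (block_mx A 0 0 0) (block_mx B 0 0 E1) (block_mx C 0 0 E2)
  = block_mx (transfer_mx A B C) 0 0
      ((svar R)^-1 *: map_mx (@rcst R) (E2 *m E1)).
Proof.
have sI_unit : (svar R)%:M \in @unitmx _ N.
  by rewrite unitmxE det_scalar unitfE expf_neq0 // svar_neq0.
rewrite /transfer_mx !map_block_mx !map_mx0 (scalar_mx_block n N).
rewrite opp_block_mx add_block_mx !oppr0 !addr0 invmx_block_diag; last first.
  by rewrite unitmxE det_ublock unitrM -!unitmxE sI_subA_unitmx sI_unit.
rewrite invmx_scalar !mulmx_block !mulmx0 !mul0mx !addr0 !add0r !mul0mx.
by rewrite mul_mx_scalar -scalemxAl map_mxM.
Qed.

Variables (m : nat) (nn : 'I_m -> nat).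
Hypothesis nn_gt0 : forall i, (0 < nn i)%N.

Lemma trEblk_mul_Eblk_eq0 (a b : 'I_m) :
  ((Eblk R nn a)^T *m Eblk R nn b == 0) = (a != b).
Proof.
rewrite tr_mxcol mul_mxrow_mxcol (bigD1 a) //= big1 ?addr0; last first.
  by move=> k /negbTE ->; rewrite trmx0 mul0mx.
rewrite eqxx; have [<- | _] := eqVneq a b; last by rewrite mulmx0 eqxx.
rewrite tr_pid_mx pid_mx_1 mul1mx; apply/negP => /eqP I0.
have := mxrank1 R (nn a); rewrite I0 mxrank0 => rank0.
by have := nn_gt0 a; rewrite -rank0.
Qed.

Lemma trEset_mul_Eblk_eq0 (s : {set 'I_m}) (j : 'I_m) :
  ((Eset R nn s)^T *m Eblk R nn j == 0) = (j \notin s).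
Proof.
rewrite tr_mxrow mxcol_mul mxcol_eq0.
apply/forallP/idP => [orth | j_notin_s l].
  apply/negP => j_in_s; have := orth (enum_rank_in j_in_s j).
  by rewrite trEblk_mul_Eblk_eq0 enum_rankK_in // eqxx.
rewrite trEblk_mul_Eblk_eq0; apply: contraNneq j_notin_s => <-.
exact: enum_valP.
Qed.

Lemma ext_transfer_graphE (n : nat) (p q : 'I_m -> nat) (A : 'M[R]_n)
    (B : forall i, 'M[R]_(n, p i)) (C : forall i, 'M[R]_(q i, n))
    (Nb : 'I_m -> {set 'I_m}) (j i : 'I_m) :
  transfer_graph (ext_A nn A) (ext_B nn B) (ext_C nn Nb C) j i
  = transfer_graph A B C j i || (j \in Nb i).
Proof.
rewrite /transfer_graph transfer_mx_block_diag block_mx_eq0 !eqxx /=.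
rewrite scalemx_eq0 invr_eq0 (negbTE svar_neq0) map_mx_eq0.
by rewrite trEset_mul_Eblk_eq0 negb_and negbK.
Qed.

End ExtendedSystem.

Theorem proposition3 (R : realFieldType) (n m : nat) (p q nn : 'I_m -> nat)
  (A : 'M[R]_n) (B : forall i : 'I_m, 'M[R]_(n, p i))
  (C : forall i : 'I_m, 'M[R]_(q i, n)) (Nb : 'I_m -> {set 'I_m})
  (HNb : forall i : 'I_m, i \in Nb i)
  (Hnn : forall i : 'I_m, (0 < nn i)%N) :
  strongly_connected
    (transfer_graph (ext_A nn A) (ext_B nn B) (ext_C nn Nb C))
  <-> strongly_connected
        (graph_union (transfer_graph A B C) (neighbor_graph Nb)).
Proof.
(* HNb only concerns self-loops, which are irrelevant to connectivity. *)
have same_arcs j i : j != i ->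
    transfer_graph (ext_A nn A) (ext_B nn B) (ext_C nn Nb C) j i
    = graph_union (transfer_graph A B C) (neighbor_graph Nb) j i.
  move=> neq_ji; rewrite ext_transfer_graphE //.
  by rewrite /graph_union /neighbor_graph neq_ji.
split=> conn x y.
  by rewrite -(connect_eq_offdiag same_arcs).
by rewrite (connect_eq_offdiag same_arcs).
Qed.
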